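(* Let $\mathbf x_1,\dots,\mathbf x_n\in\mathbb R^d$ with $\|\mathbf x_i\|_2=1$ be such that $\mathbf H^\infty$ is positive definite. Suppose $y_i=\sum_j\alpha_j(\boldsymbol\beta_j^\top\mathbf x_i)^{p_j}$ for all $i\in[n]$ (a finite sum), where for each $j$, $p_j\in\{1,2,4,6,8,\dots\}$, $\boldsymbol\beta_j\in\mathbb R^d$, $\alpha_j\in\mathbb R$. Then $$\sqrt{\mathbf y^\top(\mathbf H^\infty)^{-1}\mathbf y}\le3\sum_jp_j|\alpha_j|\,\|\boldsymbol\beta_j\|_2^{p_j}.$$
   Context: $\mathbf y=(y_1,\dots,y_n)^\top$; $\mathbf H^\infty_{ij}=\frac{\mathbf x_i^\top\mathbf x_j(\pi-\arccos(\mathbf x_i^\top\mathbf x_j))}{2\pi}$ (equivalently $\mathbb E_{\mathbf w\sim\mathcal N(\mathbf 0,\mathbf I)}[\mathbf x_i^\top\mathbf x_j\mathbb I\{\mathbf w^\top\mathbf x_i\ge0,\mathbf w^\top\mathbf x_j\ge0\}]$). *)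

From Stdlib Require Export Reals Lra.
Open Scope R_scope.

Fixpoint sumR (n : nat) (f : nat -> R) : R :=
  match n with
  | O => 0
  | S k => sumR k f + f k
  end.

(* vectors in R^d are functions nat -> R, only indices < d matter *)
Definition dot (d : nat) (u v : nat -> R) : R := sumR d (fun k => u k * v k).
Definition norm2 (d : nat) (u : nat -> R) : R := sqrt (dot d u u).

Definition Hinf (d : nat) (x : nat -> nat -> R) (i j : nat) : R :=
  let c := dot d (x i) (x j) in c * (PI - acos c) / (2 * PI).

Definition pos_def (n : nat) (A : nat -> nat -> R) : Prop :=
  forall v : nat -> R, (exists i, (i < n)%nat /\ v i <> 0) ->
    0 < sumR n (fun i => sumR n (fun j => v i * A i j * v j)).

Definition is_inverse (n : nat) (A B : nat -> nat -> R) : Prop :=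
  (forall i k, (i < n)%nat -> (k < n)%nat ->
     sumR n (fun j => A i j * B j k) = if Nat.eqb i k then 1 else 0) /\
  (forall i k, (i < n)%nat -> (k < n)%nat ->
     sumR n (fun j => B i j * A j k) = if Nat.eqb i k then 1 else 0).

Definition quad (n : nat) (B : nat -> nat -> R) (y : nat -> R) : R :=
  sumR n (fun i => sumR n (fun k => y i * B i k * y k)).

From Stdlib Require Import Reals Lra Lia.
Open Scope R_scope.

(* Put z = H^{-1} y, so that y^T H^{-1} y = z^T H z and, expanding
   y, y^T H^{-1} y = sum_j alpha_j <z, ((beta_j . x_i)^p_j)_i>.  Each pairing is
   bounded by Cauchy-Schwarz for the PSD kernel G^p (G the Gram matrix of the
   x_i, PSD by the Schur product theorem), and then by the key inequality
   z^T G^p z <= (3p)^2 z^T H z.  The latter comes from acos = pi/2 - asin, which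
   gives H = G/4 + (G asin G)/(2 pi), together with the power series
   t asin t = sum_k a_k t^(2k+2) with a_k >= 1/(2k+1)^2, valid on [-1, 1]. *)

Lemma sumR_S n f : sumR (S n) f = sumR n f + f n.
Proof. reflexivity. Qed.

Lemma sumR_ext n f g :
  (forall k, (k < n)%nat -> f k = g k) -> sumR n f = sumR n g.
Proof.
  induction n as [|n IH]; intros Hfg; simpl; auto.
  rewrite IH, Hfg; auto; intros; apply Hfg; lia.
Qed.

Lemma sumR_plus n f g : sumR n (fun k => f k + g k) = sumR n f + sumR n g.
Proof. induction n as [|n IH]; simpl; [lra|]. rewrite IH. lra. Qed.

Lemma sumR_scal n c f : sumR n (fun k => c * f k) = c * sumR n f.
Proof. induction n as [|n IH]; simpl; [lra|]. rewrite IH. lra. Qed.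

Lemma sumR_zero n : sumR n (fun _ => 0) = 0.
Proof. induction n as [|n IH]; simpl; [lra|]. rewrite IH. lra. Qed.

Lemma sumR_swap n m F :
  sumR n (fun i => sumR m (fun j => F i j)) = sumR m (fun j => sumR n (fun i => F i j)).
Proof.
  induction n as [|n IH]; simpl.
  - symmetry. apply sumR_zero.
  - rewrite IH, <- sumR_plus. reflexivity.
Qed.

Lemma sumR_le n f g : (forall k, (k < n)%nat -> f k <= g k) -> sumR n f <= sumR n g.
Proof.
  induction n as [|n IH]; intros Hfg; simpl; [lra|].
  pose proof (IH (fun k Hk => Hfg k ltac:(lia))). pose proof (Hfg n ltac:(lia)). lra.
Qed.

Lemma sumR_nonneg n f : (forall k, (k < n)%nat -> 0 <= f k) -> 0 <= sumR n f.
Proof. intros Hf. rewrite <- (sumR_zero n). apply sumR_le. exact Hf. Qed.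

Lemma sumR_delta n i f :
  (i < n)%nat -> sumR n (fun k => (if Nat.eqb i k then 1 else 0) * f k) = f i.
Proof.
  induction n as [|n IH]; intros Hi; [lia|]. rewrite sumR_S.
  destruct (Nat.eqb_spec i n) as [->|Hne].
  - rewrite (sumR_ext n _ (fun _ => 0)), sumR_zero; [ring|].
    intros k Hk. destruct (Nat.eqb_spec n k); [lia|ring].
  - rewrite IH by lia. ring.
Qed.

Lemma quad_S n B v :
  quad (S n) B v = quad n B v
    + v n * sumR n (fun i => (B i n + B n i) * v i) + v n * B n n * v n.
Proof.
  unfold quad. rewrite sumR_S.
  rewrite (sumR_ext n (fun i => sumR (S n) _)
             (fun i => sumR n (fun k => v i * B i k * v k) + v i * B i n * v n))
    by (intros; apply sumR_S).
  rewrite sumR_plus, sumR_S.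
  assert (Hmid : v n * sumR n (fun i => (B i n + B n i) * v i)
      = sumR n (fun i => v i * B i n * v n) + sumR n (fun k => v n * B n k * v k)).
  { rewrite <- sumR_plus, <- sumR_scal. apply sumR_ext. intros; ring. }
  lra.
Qed.

Definition gram_pow (d p : nat) (x : nat -> nat -> R) (i j : nat) : R :=
  dot d (x i) (x j) ^ p.

Lemma dot_sym d u v : dot d u v = dot d v u.
Proof. unfold dot. apply sumR_ext. intros; ring. Qed.

Lemma dot_self_nonneg d u : 0 <= dot d u u.
Proof. apply sumR_nonneg. intros. nra. Qed.

Lemma quad_gram_pow_S n d p x z :
  quad n (gram_pow d (S p) x) z
  = sumR d (fun k => quad n (gram_pow d p x) (fun i => z i * x i k)).
Proof.
  unfold quad, gram_pow. rewrite (sumR_swap d n). apply sumR_ext. intros i _.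
  rewrite (sumR_swap d n). apply sumR_ext. intros j _.
  transitivity ((z i * dot d (x i) (x j) ^ p * z j) * dot d (x i) (x j)); [simpl; ring|].
  unfold dot at 2. rewrite <- sumR_scal. apply sumR_ext. intros; ring.
Qed.

Lemma quad_gram_pow_nonneg n d p x z : 0 <= quad n (gram_pow d p x) z.
Proof.
  revert z. induction p as [|p IH]; intros z.
  - assert (E : quad n (gram_pow d 0 x) z = sumR n z * sumR n z).
    { unfold quad, gram_pow. rewrite <- sumR_scal. apply sumR_ext. intros i _.
      rewrite Rmult_comm, <- sumR_scal. apply sumR_ext. intros; simpl; ring. }
    rewrite E. nra.
  - rewrite quad_gram_pow_S. apply sumR_nonneg. intros. apply IH.
Qed.

Lemma discriminant_nonpos a b c :
  0 <= c -> (forall l, 0 <= a + 2 * l * b + l ^ 2 * c) -> b ^ 2 <= a * c.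
Proof.
  intros Hc Hq. destruct (Req_dec c 0) as [->|Hc0].
  - destruct (Req_dec b 0) as [->|Hb0]; [nra|].
    specialize (Hq (- (a + 1) / (2 * b))).
    replace (a + 2 * (- (a + 1) / (2 * b)) * b + (- (a + 1) / (2 * b)) ^ 2 * 0)
      with (-1) in Hq by (field; auto). lra.
  - specialize (Hq (- b / c)).
    replace (a + 2 * (- b / c) * b + (- b / c) ^ 2 * c) with ((a * c - b ^ 2) / c) in Hq
      by (field; auto).
    assert (Hpos : 0 <= (a * c - b ^ 2) / c * c) by (apply Rmult_le_pos; lra).
    replace ((a * c - b ^ 2) / c * c) with (a * c - b ^ 2) in Hpos by (field; auto). lra.
Qed.

Definition extend {A : Type} (n : nat) (u : nat -> A) (a : A) (i : nat) : A :=
  if Nat.ltb i n then u i else a.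

Lemma extend_lt {A : Type} n (u : nat -> A) a i : (i < n)%nat -> extend n u a i = u i.
Proof. intros Hi. unfold extend. apply Nat.ltb_lt in Hi. rewrite Hi. reflexivity. Qed.

Lemma extend_last {A : Type} n (u : nat -> A) a : extend n u a n = a.
Proof. unfold extend. rewrite Nat.ltb_irrefl. reflexivity. Qed.

(* Cauchy-Schwarz for the PSD kernel (x_i . x_j)^p, tested against the
   feature vector of an extra point [b]: positivity on the family x_1..x_n, b. *)
Lemma gram_pow_cauchy_schwarz n d p x z b :
  (sumR n (fun i => z i * dot d b (x i) ^ p)) ^ 2
  <= quad n (gram_pow d p x) z * dot d b b ^ p.
Proof.
  apply discriminant_nonpos; [apply pow_le, dot_self_nonneg|]. intros l.
  pose proof (quad_gram_pow_nonneg (S n) d p (extend n x b) (extend n z l)) as Hpsd.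
  rewrite quad_S, extend_last in Hpsd.
  replace (quad n (gram_pow d p (extend n x b)) (extend n z l))
    with (quad n (gram_pow d p x) z) in Hpsd.
  2:{ unfold quad, gram_pow. apply sumR_ext. intros i Hi. apply sumR_ext. intros j Hj.
      rewrite !extend_lt by assumption. reflexivity. }
  replace (sumR n _) with (2 * sumR n (fun i => z i * dot d b (x i) ^ p)) in Hpsd.
  2:{ rewrite <- sumR_scal. apply sumR_ext. intros i Hi.
      unfold gram_pow. rewrite (extend_lt n x b i Hi), (extend_lt n z l i Hi), extend_last.
      rewrite (dot_sym d (x i) b). ring. }
  replace (gram_pow d p (extend n x b) n n) with (dot d b b ^ p) in Hpsd
    by (unfold gram_pow; rewrite extend_last; reflexivity).
  replace (l ^ 2 * dot d b b ^ p) with (l * dot d b b ^ p * l) by ring. lra.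
Qed.

Lemma dot_unit_bound d a b :
  norm2 d a = 1 -> norm2 d b = 1 -> -1 <= dot d a b <= 1.
Proof.
  unfold norm2. intros Ha Hb.
  assert (Haa : dot d a a = 1)
    by (rewrite <- (sqrt_sqrt _ (dot_self_nonneg d a)), Ha; ring).
  assert (Hbb : dot d b b = 1)
    by (rewrite <- (sqrt_sqrt _ (dot_self_nonneg d b)), Hb; ring).
  pose proof (gram_pow_cauchy_schwarz 1 d 1 (fun _ => a) (fun _ => 1) b) as Hcs.
  unfold quad, gram_pow in Hcs. simpl in Hcs. rewrite Haa, Hbb, dot_sym in Hcs.
  nra.
Qed.

Lemma nondecreasing_of_deriv (f f' : R -> R) a b :
  a <= b ->
  (forall c, a <= c <= b -> derivable_pt_lim f c (f' c)) ->
  (forall c, a < c < b -> 0 <= f' c) -> f a <= f b.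
Proof.
  intros Hab Hder Hpos. destruct (Req_dec a b) as [->|Hne]; [lra|].
  destruct (MVT_cor2 f f' a b) as [c [Hmvt Hc]]; [lra|exact Hder|].
  pose proof (Hpos c Hc). nra.
Qed.

Lemma derivable_pt_lim_sumR K (f f' : nat -> R -> R) r :
  (forall k, derivable_pt_lim (f k) r (f' k r)) ->
  derivable_pt_lim (fun t => sumR K (fun k => f k t)) r (sumR K (fun k => f' k r)).
Proof.
  intros Hder. induction K as [|K IH]; simpl.
  - apply (derivable_pt_lim_const 0).
  - apply (derivable_pt_lim_plus (fun t => sumR K (fun k => f k t)) (f K)); auto.
Qed.

Lemma derivable_pt_lim_monomial c m r :
  derivable_pt_lim (fun t => c * t ^ m) r (c * (INR m * r ^ pred m)).
Proof. apply (derivable_pt_lim_scal (fun t => t ^ m)), derivable_pt_lim_pow. Qed.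

(* b_k = (2k-1)!!/(2k)!!, the Taylor coefficients of (1 - r^2)^(-1/2) in r^2. *)
Fixpoint invsqrt_coef (k : nat) : R :=
  match k with
  | O => 1
  | S k' => invsqrt_coef k' * (2 * INR k' + 1) / (2 * INR k' + 2)
  end.

(* a_k = b_k / (2k+1), the Taylor coefficients of arcsin in r^(2k+1). *)
Definition asin_coef (k : nat) : R := invsqrt_coef k / (2 * INR k + 1).

Lemma invsqrt_coef_succ k :
  (2 * INR k + 2) * invsqrt_coef (S k) = (2 * INR k + 1) * invsqrt_coef k.
Proof. simpl invsqrt_coef. pose proof (pos_INR k). field. lra. Qed.

Lemma invsqrt_coef_bounds k :
  0 < invsqrt_coef k /\ invsqrt_coef k <= 1 /\ 1 / (2 * INR k + 1) <= invsqrt_coef k.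
Proof.
  induction k as [|k [Hpos [Hle1 Hlow]]]; [simpl; lra|].
  pose proof (pos_INR k). pose proof (invsqrt_coef_succ k) as Hrec. rewrite S_INR.
  assert (Hlow' : 1 <= invsqrt_coef k * (2 * INR k + 1)).
  { apply (Rmult_le_compat_r (2 * INR k + 1)) in Hlow; [|lra].
    replace (1 / (2 * INR k + 1) * (2 * INR k + 1)) with 1 in Hlow by (field; lra). lra. }
  set (b := invsqrt_coef (S k)) in *.
  split; [|split]; [nra|nra|].
  apply (Rmult_le_reg_r (2 * (INR k + 1) + 1)); [lra|].
  replace (1 / (2 * (INR k + 1) + 1) * (2 * (INR k + 1) + 1)) with 1 by (field; lra).
  nra.
Qed.

Lemma asin_coef_nonneg k : 0 <= asin_coef k.
Proof.
  destruct (invsqrt_coef_bounds k) as [Hpos _]. pose proof (pos_INR k).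
  unfold asin_coef. apply Rlt_le, Rdiv_lt_0_compat; lra.
Qed.

(* a_k >= 1/(2k+1)^2: the coefficients decay at most quadratically; this is
   the source of the factor p^2 in the key inequality. *)
Lemma asin_coef_lower k : 1 / (2 * INR k + 1) ^ 2 <= asin_coef k.
Proof.
  destruct (invsqrt_coef_bounds k) as [_ [_ Hlow]]. pose proof (pos_INR k).
  unfold asin_coef. replace (1 / (2 * INR k + 1) ^ 2) with (1 / (2 * INR k + 1) / (2 * INR k + 1))
    by (field; lra).
  unfold Rdiv at 1 3. apply Rmult_le_compat_r; [|exact Hlow].
  apply Rlt_le, Rinv_0_lt_compat. lra.
Qed.

(* Partial sums D_K of (1-r^2)^(-1/2), their derivatives D_K', and partial
   sums S_K of arcsin. *)
Definition invsqrt_sum (K : nat) (r : R) : R :=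
  sumR K (fun k => invsqrt_coef k * r ^ (2 * k)).
Definition invsqrt_sum_deriv (K : nat) (r : R) : R :=
  sumR K (fun k => invsqrt_coef k * (INR (2 * k) * r ^ pred (2 * k))).
Definition asin_sum (K : nat) (r : R) : R :=
  sumR K (fun k => asin_coef k * r ^ (2 * k + 1)).

Lemma invsqrt_sum_has_deriv K r : derivable_pt_lim (invsqrt_sum K) r (invsqrt_sum_deriv K r).
Proof.
  apply (derivable_pt_lim_sumR K (fun k t => invsqrt_coef k * t ^ (2 * k))
           (fun k t => invsqrt_coef k * (INR (2 * k) * t ^ pred (2 * k)))).
  intros k. apply derivable_pt_lim_monomial.
Qed.

Lemma asin_sum_has_deriv K r : derivable_pt_lim (asin_sum K) r (invsqrt_sum K r).
Proof.
  assert (Hterm : forall k, asin_coef k * (INR (2 * k + 1) * r ^ pred (2 * k + 1))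
                            = invsqrt_coef k * r ^ (2 * k)).
  { intros k. replace (pred (2 * k + 1)) with (2 * k)%nat by lia.
    rewrite plus_INR, mult_INR. unfold asin_coef. simpl INR. pose proof (pos_INR k).
    field. lra. }
  replace (invsqrt_sum K r)
    with (sumR K (fun k => asin_coef k * (INR (2 * k + 1) * r ^ pred (2 * k + 1))))
    by (apply sumR_ext; intros; apply Hterm).
  apply (derivable_pt_lim_sumR K (fun k t => asin_coef k * t ^ (2 * k + 1))
           (fun k t => asin_coef k * (INR (2 * k + 1) * t ^ pred (2 * k + 1)))).
  intros k. apply derivable_pt_lim_monomial.
Qed.

Lemma invsqrt_sum_nonneg K r : 0 <= invsqrt_sum K r.
Proof.
  apply sumR_nonneg. intros k _. destruct (invsqrt_coef_bounds k) as [Hb _].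
  rewrite pow_mult. pose proof (pow_le (r ^ 2) k ltac:(nra)). nra.
Qed.

Lemma invsqrt_sum_at_0 K : invsqrt_sum (S K) 0 = 1.
Proof.
  induction K as [|K IH]; [unfold invsqrt_sum; simpl; ring|].
  unfold invsqrt_sum in *. rewrite sumR_S, IH, pow_i by lia. ring.
Qed.

Lemma asin_sum_at_0 K : asin_sum K 0 = 0.
Proof.
  unfold asin_sum. transitivity (sumR K (fun _ => 0)); [|apply sumR_zero].
  apply sumR_ext. intros k _. rewrite pow_i by lia. ring.
Qed.

(* The defect of D_K as a solution of (1 - r^2) D' = r D is a single monomial. *)
Lemma invsqrt_sum_ode K r :
  (1 - r ^ 2) * invsqrt_sum_deriv (S K) r - r * invsqrt_sum (S K) r
  = - (2 * INR K + 1) * invsqrt_coef K * r ^ (2 * K + 1).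
Proof.
  induction K as [|K IH]; [unfold invsqrt_sum_deriv, invsqrt_sum; simpl; ring|].
  unfold invsqrt_sum_deriv, invsqrt_sum in *. rewrite (sumR_S (S K)), (sumR_S (S K)).
  replace (pred (2 * S K)) with (2 * K + 1)%nat by lia.
  replace (r ^ (2 * S K)) with (r * r ^ (2 * K + 1))
    by (replace (2 * S K)%nat with (S (2 * K + 1)) by lia; reflexivity).
  replace (r ^ (2 * S K + 1)) with (r * (r * r ^ (2 * K + 1)))
    by (replace (2 * S K + 1)%nat with (S (S (2 * K + 1))) by lia; reflexivity).
  rewrite mult_INR. simpl (INR 2). rewrite !S_INR.
  pose proof (invsqrt_coef_succ K) as Hrec.
  transitivity (((1 - r ^ 2)
        * sumR (S K) (fun k => invsqrt_coef k * (INR (2 * k) * r ^ pred (2 * k)))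
      - r * sumR (S K) (fun k => invsqrt_coef k * r ^ (2 * k)))
      + r ^ (2 * K + 1) * ((2 * INR K + 2) * invsqrt_coef (S K))
      - (2 * INR K + 3) * invsqrt_coef (S K) * (r * (r * r ^ (2 * K + 1)))); [ring|].
  rewrite IH, Hrec. ring.
Qed.

(* phi_K(r) = ((1 - r^2)^(1/2) D_K(r))^2; it starts at 1 and decreases. *)
Definition phi (K : nat) (r : R) : R :=
  (1 - r ^ 2) * (invsqrt_sum K r * invsqrt_sum K r).

Lemma phi_has_deriv K r :
  derivable_pt_lim (phi (S K)) r
    (- 2 * (2 * INR K + 1) * invsqrt_coef K * invsqrt_sum (S K) r * r ^ (2 * K + 1)).
Proof.
  replace (- 2 * (2 * INR K + 1) * invsqrt_coef K * invsqrt_sum (S K) r * r ^ (2 * K + 1))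
    with ((0 - INR 2 * r ^ 1) * (invsqrt_sum (S K) r * invsqrt_sum (S K) r)
          + (1 - r ^ 2) * (invsqrt_sum_deriv (S K) r * invsqrt_sum (S K) r
                           + invsqrt_sum (S K) r * invsqrt_sum_deriv (S K) r)).
  2:{ transitivity (2 * invsqrt_sum (S K) r
        * ((1 - r ^ 2) * invsqrt_sum_deriv (S K) r - r * invsqrt_sum (S K) r)).
      - simpl INR. ring.
      - rewrite invsqrt_sum_ode. ring. }
  apply (derivable_pt_lim_mult (fun t => 1 - t ^ 2)
           (fun t => invsqrt_sum (S K) t * invsqrt_sum (S K) t)).
  - apply (derivable_pt_lim_minus (fun _ => 1) (fun t => t ^ 2)).
    + apply derivable_pt_lim_const.
    + apply derivable_pt_lim_pow.
  - apply (derivable_pt_lim_mult (invsqrt_sum (S K)) (invsqrt_sum (S K)));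
      apply invsqrt_sum_has_deriv.
Qed.

Lemma phi_le_1 K r : 0 <= r -> phi (S K) r <= 1.
Proof.
  intros Hr.
  assert (H0 : phi (S K) 0 = 1) by (unfold phi; rewrite invsqrt_sum_at_0; ring).
  enough (H : - phi (S K) 0 <= - phi (S K) r) by lra.
  apply (nondecreasing_of_deriv (fun t => - phi (S K) t)
           (fun t => 2 * (2 * INR K + 1) * invsqrt_coef K * invsqrt_sum (S K) t
                     * t ^ (2 * K + 1)) 0 r Hr).
  - intros c _. replace (2 * (2 * INR K + 1) * invsqrt_coef K * invsqrt_sum (S K) c
                         * c ^ (2 * K + 1))
      with (- (- 2 * (2 * INR K + 1) * invsqrt_coef K * invsqrt_sum (S K) c
               * c ^ (2 * K + 1))) by ring.
    apply (derivable_pt_lim_opp (phi (S K))), phi_has_deriv.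
  - intros c Hc. destruct (invsqrt_coef_bounds K) as [Hb _]. pose proof (pos_INR K).
    pose proof (invsqrt_sum_nonneg (S K) c). pose proof (pow_le c (2 * K + 1) ltac:(lra)).
    repeat apply Rmult_le_pos; lra.
Qed.

Lemma sqrt_1_minus_sq r :
  0 <= r < 1 -> 0 < sqrt (1 - r ^ 2) /\ sqrt (1 - r ^ 2) * sqrt (1 - r ^ 2) = 1 - r ^ 2.
Proof. intros Hr. split; [apply sqrt_lt_R0 | apply sqrt_sqrt]; nra. Qed.

Lemma invsqrt_sum_le K r : 0 <= r < 1 -> sqrt (1 - r ^ 2) * invsqrt_sum K r <= 1.
Proof.
  intros Hr. destruct K as [|K]; [unfold invsqrt_sum; simpl; lra|].
  destruct (sqrt_1_minus_sq r Hr) as [Hsig Hsq].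
  pose proof (phi_le_1 K r ltac:(lra)) as Hphi. unfold phi in Hphi. rewrite <- Hsq in Hphi.
  pose proof (invsqrt_sum_nonneg (S K) r). nra.
Qed.

(* Quantitative version: 1 - phi_{K+1}(r) <= 2 r^(2K+2) / (1 - r^2)^(1/2).
   Compare phi with the increasing function phi(t) + 2 t^(2K+2) / (1 - r^2)^(1/2). *)
Lemma phi_gap K r :
  0 <= r < 1 -> 1 - phi (S K) r <= 2 * r ^ (2 * K + 2) / sqrt (1 - r ^ 2).
Proof.
  intros Hr. destruct (sqrt_1_minus_sq r Hr) as [Hsig _]. set (sig := sqrt (1 - r ^ 2)) in *.
  assert (H0 : phi (S K) 0 = 1) by (unfold phi; rewrite invsqrt_sum_at_0; ring).
  enough (H : phi (S K) 0 + 2 / sig * 0 ^ (2 * K + 2)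
              <= phi (S K) r + 2 / sig * r ^ (2 * K + 2)).
  { rewrite H0, pow_i in H by lia. unfold Rdiv in *. lra. }
  apply (nondecreasing_of_deriv (fun t => phi (S K) t + 2 / sig * t ^ (2 * K + 2))
    (fun t => - 2 * (2 * INR K + 1) * invsqrt_coef K * invsqrt_sum (S K) t * t ^ (2 * K + 1)
              + 2 / sig * (INR (2 * K + 2) * t ^ pred (2 * K + 2))) 0 r); [lra| |].
  - intros c _. apply (derivable_pt_lim_plus (phi (S K)) (fun t => 2 / sig * t ^ (2 * K + 2))).
    + apply phi_has_deriv.
    + apply derivable_pt_lim_monomial.
  - intros t Ht. replace (pred (2 * K + 2)) with (2 * K + 1)%nat by lia.
    replace (INR (2 * K + 2)) with (2 * INR K + 2) by (rewrite plus_INR, mult_INR; simpl; ring).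
    destruct (invsqrt_coef_bounds K) as [Hb [Hb1 _]]. pose proof (pos_INR K).
    pose proof (invsqrt_sum_nonneg (S K) t). pose proof (invsqrt_sum_le (S K) t ltac:(lra)).
    assert (Hsig_t : sig <= sqrt (1 - t ^ 2)) by (apply sqrt_le_1_alt; nra).
    set (a := sig * invsqrt_sum (S K) t).
    assert (Ha : 0 <= a <= 1) by (unfold a; split; nra).
    assert (Hba : invsqrt_coef K * a <= 1) by nra.
    assert (Hk : (2 * INR K + 1) * invsqrt_coef K * a <= 2 * INR K + 2) by nra.
    replace (- 2 * (2 * INR K + 1) * invsqrt_coef K * invsqrt_sum (S K) t * t ^ (2 * K + 1)
             + 2 / sig * ((2 * INR K + 2) * t ^ (2 * K + 1)))
      with (2 * t ^ (2 * K + 1) / sig * ((2 * INR K + 2) - (2 * INR K + 1) * invsqrt_coef K * a))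
      by (unfold a; field; lra).
    apply Rmult_le_pos; [|lra].
    apply Rlt_le, Rdiv_lt_0_compat; [|lra]. pose proof (pow_lt t (2 * K + 1) ltac:(lra)). lra.
Qed.

Lemma asin_has_deriv t : -1 < t < 1 -> derivable_pt_lim asin t (1 / sqrt (1 - t ^ 2)).
Proof.
  intros Ht. apply (derive_pt_eq_1 _ _ _ (derivable_pt_asin t Ht)).
  rewrite derive_pt_asin, Rsqr_pow2. reflexivity.
Qed.

Lemma invsqrt_tail_bound K t :
  0 <= t < 1 -> 1 / sqrt (1 - t ^ 2) - invsqrt_sum (S K) t <= 2 * t ^ (2 * K + 2) / (1 - t ^ 2).
Proof.
  intros Ht. destruct (sqrt_1_minus_sq t Ht) as [Hsig Hsq]. pose proof (phi_gap K t Ht) as Hgap.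
  pose proof (invsqrt_sum_nonneg (S K) t). pose proof (invsqrt_sum_le (S K) t Ht).
  set (sig := sqrt (1 - t ^ 2)) in *. set (a := sig * invsqrt_sum (S K) t) in *.
  assert (Ha : 0 <= a <= 1) by (split; [unfold a|]; nra).
  assert (Hphi : phi (S K) t = a * a) by (unfold phi, a; rewrite <- Hsq; ring).
  rewrite Hphi in Hgap.
  replace (1 / sig - invsqrt_sum (S K) t) with ((1 - a) / sig) by (unfold a; field; lra).
  replace (2 * t ^ (2 * K + 2) / (1 - t ^ 2)) with (2 * t ^ (2 * K + 2) / sig / sig)
    by (rewrite <- Hsq; field; lra).
  unfold Rdiv at 1 3. apply Rmult_le_compat_r; [apply Rlt_le, Rinv_0_lt_compat; lra|].
  nra.
Qed.

Lemma asin_sum_le K s : 0 <= s < 1 -> asin_sum K s <= asin s.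
Proof.
  intros Hs.
  enough (H : asin 0 - asin_sum K 0 <= asin s - asin_sum K s)
    by (rewrite asin_0, asin_sum_at_0 in H; lra).
  apply (nondecreasing_of_deriv (fun t => asin t - asin_sum K t)
           (fun t => 1 / sqrt (1 - t ^ 2) - invsqrt_sum K t) 0 s); [lra| |].
  - intros c Hc. apply (derivable_pt_lim_minus asin (asin_sum K)).
    + apply asin_has_deriv. lra.
    + apply asin_sum_has_deriv.
  - intros c Hc. destruct (sqrt_1_minus_sq c ltac:(lra)) as [Hsig _].
    pose proof (invsqrt_sum_le K c ltac:(lra)).
    replace (1 / sqrt (1 - c ^ 2) - invsqrt_sum K c)
      with ((1 - sqrt (1 - c ^ 2) * invsqrt_sum K c) / sqrt (1 - c ^ 2)) by (field; lra).
    apply Rmult_le_pos; [lra|]. apply Rlt_le, Rinv_0_lt_compat. lra.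
Qed.

(* Explicit error bound for S_{K+1} on [0, 1), obtained by integrating
   invsqrt_tail_bound. *)
Lemma asin_sum_gap K s :
  0 <= s < 1 -> asin s - asin_sum (S K) s <= 2 * s ^ (2 * K + 2) / (1 - s ^ 2).
Proof.
  intros Hs. set (M := 2 * s ^ (2 * K + 2) / (1 - s ^ 2)).
  assert (HM : 0 <= M).
  { unfold M. pose proof (pow_le s (2 * K + 2) ltac:(lra)).
    apply Rmult_le_pos; [lra|]. apply Rlt_le, Rinv_0_lt_compat. nra. }
  enough (H : M * 0 - (asin 0 - asin_sum (S K) 0) <= M * s - (asin s - asin_sum (S K) s))
    by (rewrite asin_0, asin_sum_at_0 in H; nra).
  apply (nondecreasing_of_deriv (fun t => M * t - (asin t - asin_sum (S K) t))
           (fun t => M * 1 - (1 / sqrt (1 - t ^ 2) - invsqrt_sum (S K) t)) 0 s); [lra| |].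
  - intros c Hc. apply (derivable_pt_lim_minus (fun t => M * t) (fun t => asin t - asin_sum (S K) t)).
    + apply (derivable_pt_lim_scal id), derivable_pt_lim_id.
    + apply (derivable_pt_lim_minus asin (asin_sum (S K))).
      * apply asin_has_deriv. lra.
      * apply asin_sum_has_deriv.
  - intros t Ht. pose proof (invsqrt_tail_bound K t ltac:(lra)).
    assert (2 * t ^ (2 * K + 2) / (1 - t ^ 2) <= M).
    { unfold M, Rdiv. apply Rmult_le_compat.
      - pose proof (pow_le t (2 * K + 2) ltac:(lra)). lra.
      - apply Rlt_le, Rinv_0_lt_compat. nra.
      - apply Rmult_le_compat_l; [lra|]. apply pow_incr. lra.
      - apply Rinv_le_contravar; nra. }
    lra.
Qed.

Lemma asin_sum_cv s : 0 <= s < 1 -> Un_cv (fun K => asin_sum K s) (asin s).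
Proof.
  intros Hs eps Heps.
  assert (Hs2 : 0 < 1 - s ^ 2) by nra.
  destruct (pow_lt_1_zero (s ^ 2) ltac:(rewrite Rabs_right; nra) (eps * (1 - s ^ 2) / 2))
    as [N HN]; [apply Rmult_lt_0_compat; nra|].
  exists (S N). intros K HK. destruct K as [|K]; [lia|].
  pose proof (asin_sum_le (S K) s Hs). pose proof (asin_sum_gap K s Hs).
  specialize (HN (S K) ltac:(lia)). rewrite <- pow_mult in HN.
  replace (2 * S K)%nat with (2 * K + 2)%nat in HN by lia.
  rewrite Rabs_right in HN by (apply Rle_ge, pow_le; lra).
  assert (Htail : 2 * s ^ (2 * K + 2) / (1 - s ^ 2) < eps).
  { apply (Rmult_lt_reg_r (1 - s ^ 2)); [lra|]. unfold Rdiv. field_simplify; lra. }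
  unfold R_dist. rewrite Rabs_left1 by lra. lra.
Qed.

Lemma asin_sum_growing s : 0 <= s -> Un_growing (fun K => asin_sum K s).
Proof.
  intros Hs K. unfold asin_sum. rewrite sumR_S.
  pose proof (asin_coef_nonneg K). pose proof (pow_le s (2 * K + 1) Hs). nra.
Qed.

Lemma asin_sum_mono K s : 0 <= s <= 1 -> asin_sum K s <= asin_sum K 1.
Proof.
  intros Hs. apply sumR_le. intros k _. apply Rmult_le_compat_l; [apply asin_coef_nonneg|].
  apply pow_incr. lra.
Qed.

Lemma le_at_endpoint (f : R -> R) a b M :
  a < b -> continuity_pt f b -> (forall s, a <= s < b -> f s <= M) -> f b <= M.
Proof.
  intros Hab Hcont Hle. destruct (Rle_dec (f b) M) as [|Hgt]; [assumption|exfalso].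
  destruct (Hcont (f b - M)) as [alp [Halp Hnear]]; [lra|].
  set (s := Rmax a (b - alp / 2)).
  assert (Hs : a <= s < b) by (unfold s; split; [apply Rmax_l|apply Rmax_lub_lt; lra]).
  assert (Hdist : Rabs (s - b) < alp).
  { rewrite Rabs_left by lra. unfold s. pose proof (Rmax_r a (b - alp / 2)). lra. }
  specialize (Hnear s (conj (conj I (Rgt_not_eq _ _ (proj2 Hs))) Hdist)).
  simpl in Hnear. unfold R_dist in Hnear. pose proof (Hle s Hs).
  apply Rabs_def2 in Hnear. lra.
Qed.

Lemma asin_sum_at_1_le K : asin_sum K 1 <= PI / 2.
Proof.
  apply (le_at_endpoint (asin_sum K) 0 1); [lra| |].
  - apply derivable_continuous_pt. exact (exist _ _ (asin_sum_has_deriv K 1)).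
  - intros s Hs. pose proof (asin_sum_le K s Hs). pose proof (asin_bound s). lra.
Qed.

Lemma Un_cv_const c : Un_cv (fun _ => c) c.
Proof. intros eps Heps. exists 0%nat. intros. unfold R_dist. rewrite Rminus_diag, Rabs_R0. lra. Qed.

Lemma asin_sum_cv_1 : Un_cv (fun K => asin_sum K 1) (PI / 2).
Proof.
  destruct (growing_cv _ (asin_sum_growing 1 ltac:(lra))) as [L HL].
  { exists (PI / 2). intros v [K ->]. apply asin_sum_at_1_le. }
  assert (HLup : L <= PI / 2)
    by exact (Rle_cv_lim asin_sum_at_1_le HL (Un_cv_const (PI / 2))).
  assert (HL0 : 0 <= L).
  { pose proof (growing_ineq _ _ (asin_sum_growing 1 ltac:(lra)) HL 0) as H.
    unfold asin_sum in H. simpl in H. lra. }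
  assert (Hangle : forall th, 0 <= th < PI / 2 -> th <= L).
  { intros th Hth. pose proof PI_RGT_0.
    assert (Hsin : 0 <= sin th < 1).
    { split; [apply sin_ge_0; lra|]. rewrite <- sin_PI2.
      apply sin_increasing_1; lra. }
    rewrite <- (asin_sin th) by lra.
    apply (Rle_cv_lim (fun K => asin_sum_mono K (sin th) ltac:(lra)) (asin_sum_cv _ Hsin) HL). }
  replace (PI / 2) with L; [exact HL|].
  destruct (Rle_lt_dec (PI / 2) L) as [|Hlt]; [lra|].
  pose proof (Hangle ((L + PI / 2) / 2) ltac:(lra)). lra.
Qed.

Lemma xasin_series t :
  -1 <= t <= 1 -> Un_cv (fun K => sumR K (fun k => asin_coef k * t ^ (2 * k + 2))) (t * asin t).
Proof.
  intros Ht. set (s := Rabs t).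
  assert (Hs : 0 <= s <= 1) by (unfold s; split; [apply Rabs_pos|apply Rabs_le; lra]).
  assert (Hcv : Un_cv (fun K => asin_sum K s) (asin s)).
  { destruct (Req_dec s 1) as [->|Hs1]; [rewrite asin_1; apply asin_sum_cv_1|].
    apply asin_sum_cv. lra. }
  assert (Eval : t * asin t = s * asin s).
  { unfold s. destruct (Rle_dec 0 t).
    - rewrite Rabs_right by lra. reflexivity.
    - rewrite Rabs_left, asin_opp by lra. ring. }
  rewrite Eval. apply (Un_cv_ext (fun K => s * asin_sum K s)).
  - intros K. unfold asin_sum. rewrite <- sumR_scal. apply sumR_ext. intros k _.
    replace (2 * k + 2)%nat with (2 * (k + 1))%nat by lia.
    rewrite pow_mult, <- pow2_abs, <- pow_mult. fold s.
    replace (2 * (k + 1))%nat with (S (2 * k + 1)) by lia. simpl. ring.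
  - apply (CV_mult (fun _ => s)); [apply Un_cv_const|exact Hcv].
Qed.

Lemma Un_cv_sumR N (f : nat -> nat -> R) (l : nat -> R) :
  (forall i, (i < N)%nat -> Un_cv (fun K => f K i) (l i)) ->
  Un_cv (fun K => sumR N (f K)) (sumR N l).
Proof.
  induction N as [|N IH]; intros Hcv; simpl.
  - apply Un_cv_const.
  - apply (CV_plus (fun K => sumR N (f K)) (fun K => f K N)).
    + apply IH. intros; apply Hcv; lia.
    + apply Hcv; lia.
Qed.

Section NTKGram.

Variables (n d : nat) (x : nat -> nat -> R).
Hypothesis hunit : forall i, (i < n)%nat -> norm2 d (x i) = 1.

Lemma gram_bound i j : (i < n)%nat -> (j < n)%nat -> -1 <= dot d (x i) (x j) <= 1.
Proof. intros Hi Hj. apply dot_unit_bound; auto. Qed.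

Definition xasin_form (z : nat -> R) : R :=
  quad n (fun i j => dot d (x i) (x j) * asin (dot d (x i) (x j))) z.

(* Since acos = pi/2 - asin:  H = G/4 + (G asin G)/(2 pi), entrywise. *)
Lemma quad_Hinf_split z :
  quad n (Hinf d x) z = 1 / 4 * quad n (gram_pow d 1 x) z + 1 / (2 * PI) * xasin_form z.
Proof.
  unfold xasin_form, quad. rewrite <- !sumR_scal, <- sumR_plus. apply sumR_ext. intros i Hi.
  rewrite <- !sumR_scal, <- sumR_plus. apply sumR_ext. intros j Hj.
  unfold Hinf, gram_pow. rewrite acos_asin by (apply gram_bound; auto).
  pose proof PI_RGT_0. field. lra.
Qed.

Lemma xasin_form_series z :
  Un_cv (fun K => sumR K (fun k => asin_coef k * quad n (gram_pow d (2 * k + 2) x) z))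
        (xasin_form z).
Proof.
  apply (Un_cv_ext (fun K => quad n (fun i j =>
           sumR K (fun k => asin_coef k * dot d (x i) (x j) ^ (2 * k + 2))) z)).
  - intros K. unfold quad, gram_pow.
    transitivity (sumR n (fun i => sumR K (fun k =>
                    sumR n (fun j => asin_coef k * (z i * dot d (x i) (x j) ^ (2 * k + 2) * z j))))).
    + apply sumR_ext. intros i _. rewrite sumR_swap. apply sumR_ext. intros j _.
      transitivity (z i * z j * sumR K (fun k => asin_coef k * dot d (x i) (x j) ^ (2 * k + 2)));
        [ring|].
      rewrite <- sumR_scal. apply sumR_ext. intros; ring.
    + rewrite sumR_swap. apply sumR_ext. intros k _. rewrite <- sumR_scal.
      apply sumR_ext. intros i _. apply sumR_scal.
  - unfold xasin_form, quad. apply Un_cv_sumR. intros i Hi. apply Un_cv_sumR. intros j Hj.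
    apply (Un_cv_ext (fun K => z i * z j * sumR K (fun k => asin_coef k * dot d (x i) (x j) ^ (2 * k + 2)))).
    + intros K. ring.
    + replace (z i * (dot d (x i) (x j) * asin (dot d (x i) (x j))) * z j)
        with (z i * z j * (dot d (x i) (x j) * asin (dot d (x i) (x j)))) by ring.
      apply (CV_mult (fun _ => z i * z j)); [apply Un_cv_const|].
      apply xasin_series, gram_bound; auto.
Qed.

Lemma xasin_partial_growing z :
  Un_growing (fun K => sumR K (fun k => asin_coef k * quad n (gram_pow d (2 * k + 2) x) z)).
Proof.
  intros K. rewrite sumR_S.
  pose proof (Rmult_le_pos _ _ (asin_coef_nonneg K) (quad_gram_pow_nonneg n d (2 * K + 2) x z)).
  lra.
Qed.

Lemma xasin_form_ge_term z k :
  asin_coef k * quad n (gram_pow d (2 * k + 2) x) z <= xasin_form z.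
Proof.
  pose proof (growing_ineq _ _ (xasin_partial_growing z) (xasin_form_series z) (S k)) as H.
  cbv beta in H. rewrite sumR_S in H.
  assert (0 <= sumR k (fun k => asin_coef k * quad n (gram_pow d (2 * k + 2) x) z)).
  { apply sumR_nonneg. intros j _.
    apply Rmult_le_pos; [apply asin_coef_nonneg|apply quad_gram_pow_nonneg]. }
  lra.
Qed.

Lemma xasin_form_nonneg z : 0 <= xasin_form z.
Proof. exact (growing_ineq _ _ (xasin_partial_growing z) (xasin_form_series z) 0). Qed.

Lemma quad_Hinf_nonneg z : 0 <= quad n (Hinf d x) z.
Proof.
  rewrite quad_Hinf_split. pose proof (quad_gram_pow_nonneg n d 1 x z).
  pose proof (xasin_form_nonneg z). pose proof PI_RGT_0.
  assert (0 <= 1 / (2 * PI)) by (apply Rlt_le, Rdiv_lt_0_compat; lra). nra.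
Qed.

(* Key inequality: for p = 1 or p even, the p-th power kernel is dominated by
   (3p)^2 H; for p = 2k+2 this uses a_k >= 1/(2k+1)^2 and 9 > 2 pi. *)
Lemma gram_pow_le_Hinf z p :
  p = 1%nat \/ (Nat.Even p /\ (2 <= p)%nat) ->
  quad n (gram_pow d p x) z <= (3 * INR p) ^ 2 * quad n (Hinf d x) z.
Proof.
  intros Hp. rewrite quad_Hinf_split.
  pose proof (xasin_form_nonneg z) as HW. pose proof (quad_gram_pow_nonneg n d 1 x z).
  pose proof PI_RGT_0. pose proof PI_4.
  assert (Hc : 0 < 1 / (2 * PI)) by (apply Rdiv_lt_0_compat; lra).
  destruct Hp as [->|[[k ->] Hk]]; [simpl INR; nra|].
  destruct k as [|k]; [lia|]. replace (2 * S k)%nat with (2 * k + 2)%nat by lia.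
  pose proof (xasin_form_ge_term z k). pose proof (asin_coef_lower k). pose proof (pos_INR k).
  pose proof (quad_gram_pow_nonneg n d (2 * k + 2) x z).
  set (Q := quad n (gram_pow d (2 * k + 2) x) z) in *. set (W := xasin_form z) in *.
  replace (INR (2 * k + 2)) with (2 * INR k + 2) by (rewrite plus_INR, mult_INR; simpl; ring).
  assert (Hcoef : 1 <= (2 * INR k + 1) ^ 2 * asin_coef k).
  { apply (Rmult_le_compat_l ((2 * INR k + 1) ^ 2)) in H3; [|nra].
    replace ((2 * INR k + 1) ^ 2 * (1 / (2 * INR k + 1) ^ 2)) with 1 in H3 by (field; lra).
    exact H3. }
  assert (HQW : Q <= (2 * INR k + 1) ^ 2 * W) by nra.
  assert (Hconst : (2 * INR k + 1) ^ 2 <= (3 * (2 * INR k + 2)) ^ 2 * (1 / (2 * PI))).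
  { apply (Rmult_le_reg_r (2 * PI)); [lra|].
    replace ((3 * (2 * INR k + 2)) ^ 2 * (1 / (2 * PI)) * (2 * PI))
      with ((3 * (2 * INR k + 2)) ^ 2) by (field; lra). nra. }
  nra.
Qed.

Lemma projection_bound z b p :
  p = 1%nat \/ (Nat.Even p /\ (2 <= p)%nat) ->
  Rabs (sumR n (fun i => z i * dot d b (x i) ^ p))
  <= 3 * INR p * norm2 d b ^ p * sqrt (quad n (Hinf d x) z).
Proof.
  intros Hp. set (q := quad n (Hinf d x) z).
  pose proof (gram_pow_cauchy_schwarz n d p x z b) as Hcs.
  pose proof (gram_pow_le_Hinf z p Hp) as Hdom. fold q in Hdom.
  assert (Hbb : dot d b b ^ p = norm2 d b ^ p * norm2 d b ^ p).
  { rewrite <- Rpow_mult_distr. unfold norm2. rewrite sqrt_sqrt by apply dot_self_nonneg.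
    reflexivity. }
  pose proof (pow_le (norm2 d b) p (sqrt_pos _)). pose proof (pos_INR p).
  pose proof (sqrt_pos q). pose proof (quad_Hinf_nonneg z) as Hq. fold q in Hq.
  set (B := 3 * INR p * norm2 d b ^ p * sqrt q).
  assert (HB : 0 <= B) by (unfold B; repeat apply Rmult_le_pos; lra).
  rewrite <- (Rabs_right B) by lra. apply Rsqr_le_abs_0. rewrite !Rsqr_pow2.
  apply (Rle_trans _ _ _ Hcs). rewrite Hbb.
  replace (B ^ 2) with ((3 * INR p) ^ 2 * (sqrt q * sqrt q) * (norm2 d b ^ p * norm2 d b ^ p))
    by (unfold B; ring).
  rewrite sqrt_sqrt by exact Hq. apply Rmult_le_compat_r; [nra|exact Hdom].
Qed.

End NTKGram.

Definition matvec (n : nat) (B : nat -> nat -> R) (y : nat -> R) (i : nat) : R :=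
  sumR n (fun k => B i k * y k).

Lemma quad_matvec n B y : quad n B y = sumR n (fun i => y i * matvec n B y i).
Proof.
  unfold quad, matvec. apply sumR_ext. intros i _. rewrite <- sumR_scal.
  apply sumR_ext. intros; ring.
Qed.

Lemma quad_inverse n A B y :
  is_inverse n A B -> quad n B y = quad n A (matvec n B y).
Proof.
  intros [HAB _]. rewrite !quad_matvec. apply sumR_ext. intros i Hi.
  rewrite Rmult_comm. f_equal.
  unfold matvec. rewrite (sumR_ext n _ (fun j => sumR n (fun k => A i j * B j k * y k)))
    by (intros; rewrite <- sumR_scal; apply sumR_ext; intros; ring).
  rewrite sumR_swap, <- (sumR_delta n i y Hi). apply sumR_ext. intros k Hk.
  rewrite <- (HAB i k Hi Hk), Rmult_comm, <- sumR_scal. apply sumR_ext. intros; ring.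
Qed.

Lemma pairing_expand n m z y (g : nat -> nat -> R) :
  (forall i, (i < n)%nat -> y i = sumR m (fun j => g j i)) ->
  sumR n (fun i => y i * z i) = sumR m (fun j => sumR n (fun i => z i * g j i)).
Proof.
  intros Hy. rewrite <- sumR_swap. apply sumR_ext. intros i Hi.
  rewrite Hy, Rmult_comm, <- sumR_scal by exact Hi. reflexivity.
Qed.

Lemma sqrt_le_of_le_mul_sqrt q R :
  0 <= R -> q <= sqrt q * R -> sqrt q <= R.
Proof.
  intros HR Hq. destruct (Rlt_le_dec q 0) as [Hneg|Hnn]; [rewrite sqrt_neg_0; lra|].
  pose proof (sqrt_pos q) as Hs. destruct (Req_dec (sqrt q) 0) as [->|Hs0]; [lra|].
  rewrite <- (sqrt_sqrt q Hnn) in Hq at 1.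
  apply (Rmult_le_reg_l (sqrt q)); lra.
Qed.

Theorem corollary6p1
  (n d : nat) (x : nat -> nat -> R)
  (hunit : forall i, (i < n)%nat -> norm2 d (x i) = 1)
  (hpd : pos_def n (Hinf d x))
  (Hinv : nat -> nat -> R) (hinv : is_inverse n (Hinf d x) Hinv)
  (m : nat) (alpha : nat -> R) (beta : nat -> nat -> R) (p : nat -> nat)
  (hp : forall j, (j < m)%nat -> p j = 1%nat \/ (Nat.Even (p j) /\ (2 <= p j)%nat))
  (y : nat -> R)
  (hy : forall i, (i < n)%nat ->
          y i = sumR m (fun j => alpha j * (dot d (beta j) (x i)) ^ (p j))) :
  sqrt (quad n Hinv y)
    <= 3 * sumR m (fun j => INR (p j) * Rabs (alpha j) * (norm2 d (beta j)) ^ (p j)).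
Proof.
  set (z := matvec n Hinv y). set (q := quad n Hinv y).
  assert (Hq : q = quad n (Hinf d x) z) by exact (quad_inverse n _ _ y hinv).
  assert (Hpair : q = sumR m (fun j => alpha j * sumR n (fun i => z i * dot d (beta j) (x i) ^ p j))).
  { unfold q. rewrite quad_matvec. fold z. rewrite (pairing_expand n m z y _ hy).
    apply sumR_ext. intros j _. rewrite <- sumR_scal. apply sumR_ext. intros; ring. }
  apply sqrt_le_of_le_mul_sqrt.
  - apply Rmult_le_pos; [lra|]. apply sumR_nonneg. intros j _.
    pose proof (pos_INR (p j)). pose proof (Rabs_pos (alpha j)).
    pose proof (pow_le (norm2 d (beta j)) (p j) (sqrt_pos _)). repeat apply Rmult_le_pos; lra.
  - rewrite Hpair at 1. rewrite <- Rmult_assoc, <- (sumR_scal m (sqrt q * 3)). apply sumR_le.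
    intros j Hj. pose proof (projection_bound n d x hunit z (beta j) (p j) (hp j Hj)) as Hb.
    rewrite <- Hq in Hb.
    pose proof (Rmult_le_compat_l _ _ _ (Rabs_pos (alpha j)) Hb).
    pose proof (Rle_abs (alpha j * sumR n (fun i => z i * dot d (beta j) (x i) ^ p j))).
    rewrite Rabs_mult in *. nra.
Qed.
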